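(* Let $G$ be a finite group of order $mn$, let $H$ be a normal subgroup of $G$ of order $n$, and suppose there exists an $(m,n,m-1,\frac{m-2}{n})$-relative difference set $R$ in $G$ relative to $H$. Then there exists a family of subsets of $G$ which partitions $G\setminus H$ and which is both an $(mn,n,m-1,m-2,0)$-DPDF and an $(mn,n,m-1,(m-2)(n-1),(m-1)n)$-EPDF in $G$.
   Context: Groups are written multiplicatively with identity $e$; $G^*=G\setminus\{e\}$. For $D\subseteq G$, $\Delta(D)$ is the multiset $\{xy^{-1}: x,y\in D, x\ne y\}$; for $D_1,D_2\subseteq G$, $\Delta(D_1,D_2)$ is the multiset $\{xy^{-1}:x\in D_1,y\in D_2\}$. For a family $A=\{A_1,\dots,A_s\}$ of pairwise disjoint subsets, ${\rm Int}(A)=\bigcup_i\Delta(A_i)$ and ${\rm Ext}(A)=\bigcup_{i\ne j}\Delta(A_i,A_j)$ (multiset unions). For $|G|=v$, a $(v,s,k,\lambda,\mu)$-DPDF is a family of $s$ pairwise disjoint $k$-subsets of $G^*$ with union $S$ such that ${\rm Int}(A)$ contains each element of $S$ exactly $\lambda$ times and each element of $G\setminus(S\cup\{e\})$ exactly $\mu$ times; a $(v,s,k,\lambda,\mu)$-EPDF is defined the same way using ${\rm Ext}(A)$. If $G$ has order $mn$ and $H$ is a normal subgroup of order $n$, a $k$-subset $R\subseteq G$ is an $(m,n,k,\lambda)$-relative difference set (RDS) relative to $H$ if $\Delta(R)$ contains each element of $G\setminus H$ exactly $\lambda$ times and no element of $H\setminus\{e\}$. A family partitions a set $X$ if its members are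 pairwise disjoint with union $X$. *)

From mathcomp Require Import all_boot all_fingroup.
Set Implicit Arguments. Unset Strict Implicit. Unset Printing Implicit Defensive.
Local Open Scope group_scope.

Section Defs.
Variable gT : finGroupType.

Definition dmult (D : {set gT}) (g : gT) : nat :=
  #|[set p in setX D D | (p.1 != p.2) && (p.1 * p.2^-1 == g)]|.

Definition dmult2 (D1 D2 : {set gT}) (g : gT) : nat :=
  #|[set p in setX D1 D2 | p.1 * p.2^-1 == g]|.

Definition int_mult s (A : 'I_s -> {set gT}) (g : gT) : nat :=
  \sum_(i < s) dmult (A i) g.

Definition ext_mult s (A : 'I_s -> {set gT}) (g : gT) : nat :=
  \sum_(i < s) \sum_(j < s | i != j) dmult2 (A i) (A j) g.

Definition fam_union s (A : 'I_s -> {set gT}) : {set gT} := \bigcup_(i < s) A i.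

Definition base_family (G : {set gT}) s k (A : 'I_s -> {set gT}) : Prop :=
  (forall i, A i \subset G :\ 1) /\ (forall i, #|A i| = k) /\
  (forall i j, i != j -> [disjoint A i & A j]).

Definition is_DPDF (G : {set gT}) v s k lam mu (A : 'I_s -> {set gT}) : Prop :=
  #|G| = v /\ base_family G k A /\
  (forall g, g \in fam_union A -> int_mult A g = lam) /\
  (forall g, g \in G :\: (fam_union A :|: [set 1]) -> int_mult A g = mu).

Definition is_EPDF (G : {set gT}) v s k lam mu (A : 'I_s -> {set gT}) : Prop :=
  #|G| = v /\ base_family G k A /\
  (forall g, g \in fam_union A -> ext_mult A g = lam) /\
  (forall g, g \in G :\: (fam_union A :|: [set 1]) -> ext_mult A g = mu).

Definition partitions s (A : 'I_s -> {set gT}) (X : {set gT}) : Prop :=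
  (forall i j, i != j -> [disjoint A i & A j]) /\ fam_union A = X.

Definition is_RDS (G H : {group gT}) m n k lam (R : {set gT}) : Prop :=
  #|G| = (m * n)%N /\ #|H| = n /\ H <| G /\ R \subset G /\ #|R| = k /\
  (forall g, g \in G :\: H -> dmult R g = lam) /\
  (forall g, g \in H :\ 1 -> dmult R g = 0%N).
End Defs.
Arguments is_DPDF {gT} G v s k lam mu A.
Arguments is_EPDF {gT} G v s k lam mu A.

(* The RDS R meets m - 1 of the m right cosets of H, each exactly once, since
   its differences avoid H \ 1; let H c be the coset it misses.  The n right
   translates R c^-1 h (h in H) are then pairwise disjoint and tile G \ H.
   Translation preserves differences, so Int counts every difference of R n
   times: n * lam = m - 2 on G \ H and 0 on H \ 1.  Since the family tiles
   G \ H, Int + Ext counts the differences of G \ H itself, namely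
   |(G \ H) \ gH| = mn - 2n for g outside H and mn - n for g in H \ 1;
   subtracting Int gives the Ext values. *)

From mathcomp Require Import all_boot all_fingroup zify.
Set Implicit Arguments.
Unset Strict Implicit.
Unset Printing Implicit Defensive.
Local Open Scope group_scope.

Section DifferenceCounts.
Variable gT : finGroupType.
Implicit Types (D E : {set gT}) (a g : gT).

Lemma dmult2E D E g :
  dmult2 D E g = \sum_(x in D) \sum_(y in E) ((x * y^-1)%g == g).
Proof.
rewrite /dmult2 -sum1_card pair_big_dep /= big_mkcond [RHS]big_mkcond /=.
apply: eq_bigr => -[x y] _; rewrite !inE.
by case: (x \in D); case: (y \in E); case: eqP.
Qed.

Lemma dmult2_card D E g : dmult2 D E g = #|D :&: g *: E|.
Proof.
have injf : injective (fun x => (x, g^-1 * x)) by move=> x y [].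
rewrite /dmult2 -(card_imset _ injf); apply: eq_card => -[x y]; rewrite !inE /=.
apply/idP/imsetP => [/andP[/andP[Dx Ey] /eqP <-] | [z]].
  by exists x; rewrite ?inE ?mem_lcoset invMg invgK mulgKV ?Dx.
rewrite inE mem_lcoset => /andP[Dz Ez] [-> ->].
by rewrite Dz Ez invMg invgK mulKVg eqxx.
Qed.

Lemma dmult_dmult2 D g : g != 1 -> dmult D g = dmult2 D D g.
Proof.
move=> g1; apply: eq_card => -[x y]; rewrite !inE /=.
by case: eqVneq => [->|_]; rewrite ?mulgV 1?eq_sym ?(negbTE g1) ?andbF.
Qed.

Lemma dmult2_rcoset D a g : dmult2 (D :* a) (D :* a) g = dmult2 D D g.
Proof.
rewrite !dmult2_card mulgA -!rcosetE -imsetI => [|x y _ _]; last exact: mulIg.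
exact/card_imset/mulIg.
Qed.

Lemma int_add_ext_mult s (A : 'I_s -> {set gT}) g :
    g != 1 -> (forall i j, i != j -> [disjoint A i & A j]) ->
  (int_mult A g + ext_mult A g)%N = dmult2 (fam_union A) (fam_union A) g.
Proof.
move=> g1 disjA; rewrite -big_split /=.
transitivity (\sum_i \sum_j dmult2 (A i) (A j) g)%N.
  apply: eq_bigr => i _; rewrite [RHS](bigD1 i) //= -dmult_dmult2 //.
  by congr (_ + _)%N; apply: eq_bigl => j; rewrite eq_sym.
rewrite dmult2E /fam_union partition_disjoint_bigcup //; apply: eq_bigr => i _.
under [RHS]eq_bigr do rewrite partition_disjoint_bigcup //.
by rewrite exchange_big; apply: eq_bigr => j _; rewrite dmult2E.
Qed.

End DifferenceCounts.

Section CosetComplement.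
Variables (gT : finGroupType) (G H : {group gT}).
Hypothesis sHG : H \subset G.

Lemma lcoset_setD (X : {set gT}) g : g \in G -> g *: (G :\: X) = G :\: g *: X.
Proof.
by move=> Gg; apply/setP => x; rewrite !mem_lcoset !inE mem_lcoset groupMl ?groupV.
Qed.

Lemma setD_setDU (X : {set gT}) : G :\: ((G :\: H) :|: X) = H :\: X.
Proof.
apply/setP => x; rewrite !inE.
by case Hx: (x \in H); case: (x \in X); rewrite /= ?orbT ?orbF ?(subsetP sHG x Hx) ?andNb.
Qed.

Lemma dmult2_setD_in g :
  g \in H -> dmult2 (G :\: H) (G :\: H) g = #|G :\: H|.
Proof.
by move=> Hg; rewrite dmult2_card lcoset_setD ?(subsetP sHG) // lcoset_id ?setIid.
Qed.

Lemma dmult2_setD_notin g :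
  g \in G :\: H -> dmult2 (G :\: H) (G :\: H) g = (#|G :\: H| - #|H|)%N.
Proof.
case/setDP=> Gg Hg; rewrite dmult2_card lcoset_setD // setIDA setIDAC setIid.
have sgHGH : g *: H \subset G :\: H.
  apply/subsetP => _ /lcosetP[h Hh ->].
  by rewrite !inE (groupMr _ Hh) (groupMr _ (subsetP sHG _ Hh)) Hg Gg.
by rewrite cardsD (setIidPr sgHGH) card_lcoset.
Qed.

End CosetComplement.

Section RelativeDifferenceSets.
Variable gT : finGroupType.
Implicit Types (G H : {group gT}) (R : {set gT}).

Lemma dmult_eq0_rcoset_inj H R :
    (forall g, g \in H :\ 1 -> dmult R g = 0%N) ->
  {in R &, forall x y, x * y^-1 \in H -> x = y}.
Proof.
move=> RH1 x y Rx Ry Hxy; apply/eqP; apply: contraT => xy.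
have: (x, y) \in [set p in setX R R | (p.1 != p.2) && (p.1 * p.2^-1 == x * y^-1)].
  by rewrite !inE /= Rx Ry xy eqxx.
by rewrite (cards0_eq (RH1 _ _)) ?inE // Hxy andbT -eq_mulgV1.
Qed.

Lemma exists_rcoset_disjoint G H R :
  R \subset G -> #|R| < #|G : H| -> exists2 c, c \in G & [disjoint R & H :* c].
Proof.
move=> sRG ltRGH.
have /subsetPn[_ /rcosetsP[c Gc ->] notRc] : ~~ (rcosets H G \subset rcosets H R).
  apply: contraTN ltRGH => /subset_leq_card leGR.
  by rewrite -leqNgt (leq_trans leGR) ?leq_imset_card.
exists c => //; apply/pred0P => r /=; apply/andP => -[Rr Hcr]; apply: (negP notRc).
by apply/rcosetsP; exists r => //; apply/esym/rcoset_eqP.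
Qed.

End RelativeDifferenceSets.

Lemma disjoint_rcoset_translates (gT : finGroupType) (H : {group gT}) (R : {set gT}) x y :
    R \subset 'N(H) -> {in R &, forall r s, r * s^-1 \in H -> r = s} ->
  x * y^-1 \in H -> x != y -> [disjoint R :* x & R :* y].
Proof.
move=> nHR injR Hxy xy; apply/pred0P => z /=.
apply/andP => -[/rcosetP[r Rr ->] /rcosetP[s Rs rxsy]].
have r_eq_s : r = s.
  apply: injR => //.
  have -> : r * s^-1 = (y * x^-1) ^ s^-1 by rewrite conjgE invgK !mulgA -rxsy mulgK.
  by rewrite memJ_norm ?groupV ?(subsetP nHR) // -[y * x^-1]invgK invMg invgK groupV.
by move: rxsy xy; rewrite r_eq_s => /mulgI ->; rewrite eqxx.
Qed.

Section RdsTranslates.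
Variables (gT : finGroupType) (G H : {group gT}) (R : {set gT}) (c : gT).
Hypotheses (nsHG : H <| G) (sRG : R \subset G) (Gc : c \in G).
Hypothesis injR : {in R &, forall x y, x * y^-1 \in H -> x = y}.
Hypothesis disjRc : [disjoint R & H :* c].
Hypothesis cardR : #|R|.+1 = #|G : H|.

Definition rds_translates (i : 'I_#|H|) : {set gT} := R :* (c^-1 * enum_val i).

Let sHG : H \subset G := normal_sub nsHG.

Lemma rds_translates_sub i : rds_translates i \subset G :\: H.
Proof.
have Hi : enum_val i \in H := enum_valP i.
apply/subsetP => _ /rcosetP[r Rr ->].
rewrite inE mulgA groupMr // -mem_rcoset (disjointFr disjRc Rr) /=.
by rewrite (groupMr _ (subsetP sHG _ Hi)) (groupMl _ (subsetP sRG _ Rr)) groupV.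
Qed.

Lemma rds_translates_disjoint i j :
  i != j -> [disjoint rds_translates i & rds_translates j].
Proof.
move=> ij; apply: disjoint_rcoset_translates => //.
- exact: subset_trans sRG (normal_norm nsHG).
- exact: injR.
- rewrite (_ : _ * _ = (enum_val i * (enum_val j)^-1) ^ c).
    by rewrite memJ_norm ?(subsetP (normal_norm nsHG)) // groupM ?groupV ?enum_valP.
  by rewrite conjgE invMg invgK !mulgA.
- by apply: contra ij => /eqP/mulgI/enum_val_inj ->.
Qed.

Lemma rds_translates_partition : partitions rds_translates (G :\: H).
Proof.
split; first exact: rds_translates_disjoint.
apply/eqP; rewrite eqEcard; apply/andP; split.
  by apply/bigcupsP => i _; apply: rds_translates_sub.
have -> : #|fam_union rds_translates| = (#|H| * #|R|)%N.
  rewrite -sum1_card partition_disjoint_bigcup; last exact: rds_translates_disjoint.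
  under eq_bigr do rewrite sum1_card card_rcoset.
  by rewrite sum_nat_const card_ord mulnC.
by rewrite cardsD (setIidPr sHG) -(Lagrange sHG) -cardR mulnSr addnK.
Qed.

Lemma int_mult_rds_translates g :
  g != 1 -> int_mult rds_translates g = (#|H| * dmult R g)%N.
Proof.
move=> g1; rewrite /int_mult.
under eq_bigr do rewrite dmult_dmult2 // dmult2_rcoset -dmult_dmult2 //.
by rewrite sum_nat_const card_ord.
Qed.

Lemma ext_mult_rds_translates g : g != 1 ->
  ext_mult rds_translates g = (dmult2 (G :\: H) (G :\: H) g - #|H| * dmult R g)%N.
Proof.
move=> g1; have [disjA <-] := rds_translates_partition.
by rewrite -(int_add_ext_mult g1 disjA) int_mult_rds_translates // addKn.
Qed.

End RdsTranslates.

Arguments rds_translates {gT} H R c i.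

Theorem mainTheorem2 (gT : finGroupType) (G H : {group gT}) (m n lam : nat) :
  #|G| = (m * n)%N -> #|H| = n -> H <| G ->
  (lam * n + 2)%N = m ->
  (exists R : {set gT}, is_RDS G H m n (m - 1)%N lam R) ->
  exists A : 'I_n -> {set gT},
    partitions A (G :\: H) /\
    is_DPDF G (m * n)%N n (m - 1)%N (m - 2)%N 0%N A /\
    is_EPDF G (m * n)%N n (m - 1)%N ((m - 2) * (n - 1))%N ((m - 1) * n)%N A.
Proof.
move=> cardG cardH nsHG defm [R [_ [_ [_ [sRG [cardR [RGH RH1]]]]]]]; subst n.
have sHG := normal_sub nsHG.
have indexH : #|G : H| = m.
  by apply/eqP; rewrite -(eqn_pmul2l (cardG_gt0 H)) (Lagrange sHG) cardG mulnC.
have cardRS : #|R|.+1 = #|G : H| by rewrite cardR indexH -defm; lia.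
have [c Gc disjRc] := exists_rcoset_disjoint sRG (eq_leq cardRS).
have injR := dmult_eq0_rcoset_inj RH1.
have [disjA unionA] := rds_translates_partition nsHG sRG Gc injR disjRc cardRS.
have extA := ext_mult_rds_translates nsHG sRG Gc injR disjRc cardRS.
have cardGH : #|G :\: H| = (m * #|H| - #|H|)%N by rewrite cardsD (setIidPr sHG) cardG.
have baseA : base_family G (m - 1) (rds_translates H R c).
  split=> [i|]; last split=> [i|]; last exact: disjA.
  - exact: subset_trans (rds_translates_sub nsHG sRG Gc disjRc i) (setDS _ (sub1G H)).
  - by rewrite card_rcoset cardR.
exists (rds_translates H R c); split; first by [].
rewrite /is_DPDF /is_EPDF unionA setD_setDU //.
have GH_neq1 g : g \in G :\: H -> g != 1 by apply: contraTneq => ->; rewrite inE group1.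
split; (split; first by rewrite cardG); split=> //; split=> g Hg.
- by rewrite int_mult_rds_translates ?GH_neq1 // RGH // -defm; lia.
- by rewrite int_mult_rds_translates ?(setD1P Hg).1 // RH1 // muln0.
- rewrite extA ?GH_neq1 // dmult2_setD_notin // RGH // cardGH -defm; nia.
- rewrite extA ?(setD1P Hg).1 // dmult2_setD_in ?(setD1P Hg).2 // RH1 //; lia.
Qed.
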